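(* For $i\in\{1,\dots,n\}$ let $g_i:\mathbb{R}\to]-\infty,+\infty]$ be proper, lower semicontinuous and convex, and define $g:\mathbb{R}^n\to]-\infty,+\infty]$ by $g(x)=\sum_{i=1}^n g_i(x_i)$. Then for every $\alpha>0$ and every $\eta\in\mathbb{R}^n_{>0}$, both $\mathrm{prox}_{\alpha g}$ (which equals the resolvent $J_{\alpha\partial g}=(\mathrm{Id}+\alpha\partial g)^{-1}$) and $2\,\mathrm{prox}_{\alpha g}-\mathrm{Id}$ (which equals $R_{\alpha\partial g}=2J_{\alpha\partial g}-\mathrm{Id}$) are nonexpansive with respect to $\|\cdot\|_{\infty,[\eta]^{-1}}$, i.e., $\|T(x)-T(y)\|_{\infty,[\eta]^{-1}}\le\|x-y\|_{\infty,[\eta]^{-1}}$ for all $x,y$ for each of these maps $T$.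
   Context: For a proper lower semicontinuous convex $h:\mathbb{R}^n\to]-\infty,+\infty]$, the proximal operator is $\mathrm{prox}_h(x)=\arg\min_{z\in\mathbb{R}^n}\tfrac12\|x-z\|_2^2+h(z)$ (single-valued), and $\partial h$ denotes the subdifferential. For $\eta\in\mathbb{R}^n_{>0}$, $\|x\|_{\infty,[\eta]^{-1}}=\max_i|x_i|/\eta_i$. *)

From HB Require Import structures.
From mathcomp Require Import all_boot all_order all_algebra.
From mathcomp Require Import all_classical all_reals all_analysis.
Set Implicit Arguments. Unset Strict Implicit. Unset Printing Implicit Defensive.
Import Order.TTheory GRing.Theory Num.Theory.
Import numFieldNormedType.Exports.
Local Open Scope ring_scope.

Definition proper_fun (R : realType) (f : R -> \bar R) : Prop :=
  (forall x, f x <> -oo%E) /\ (exists x, (f x < +oo)%E).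

Definition convex_ext (R : realType) (f : R -> \bar R) : Prop :=
  forall (x y t : R), 0 < t < 1 ->
    (f (t * x + (1 - t) * y)%R <= t%:E * f x + (1 - t)%R%:E * f y)%E.

Definition sep_sum (R : realType) (n : nat) (g : 'I_n -> R -> \bar R)
  (x : 'I_n -> R) : \bar R := (\sum_(i < n) g i (x i))%E.

Definition is_prox (R : realType) (n : nat) (h : ('I_n -> R) -> \bar R)
  (x z : 'I_n -> R) : Prop :=
  forall w : 'I_n -> R,
    ((2^-1 * \sum_(i < n) (x i - z i) ^+ 2)%:E + h z
     <= (2^-1 * \sum_(i < n) (x i - w i) ^+ 2)%:E + h w)%E.

Definition winf_norm (R : realType) (n : nat) (eta x : 'I_n -> R) : R :=
  \big[Num.max/0]_(i < n) (`|x i| / eta i).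

(** On the line, the prox of a convex function is firmly nonexpansive: if [p]
    and [q] are the prox points of [x] and [y], the variational inequalities
    characterizing them add up to [(p - q)^2 <= (p - q)(x - y)], which gives
    both [|p - q| <= |x - y|] and [|2(p - q) - (x - y)| <= |x - y|].  The prox
    of a separable sum acts coordinatewise, so these scalar bounds hold in every
    coordinate, and a weighted max norm is monotone in the absolute values of
    the coordinates. *)
From HB Require Import structures.
From mathcomp Require Import all_boot all_order all_algebra.
From mathcomp Require Import all_classical all_reals all_analysis.
From mathcomp Require Import lra ring.
Set Implicit Arguments.
Unset Strict Implicit.
Unset Printing Implicit Defensive.
Import Order.TTheory GRing.Theory Num.Theory.
Import numFieldNormedType.Exports.
Local Open Scope ring_scope.

Lemma le_of_forall_le_add_scaled (R : realFieldType) (a b c : R) : 0 <= c ->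
  (forall t, 0 < t < 1 -> a <= b + t * c) -> a <= b.
Proof.
move=> c_ge0 le_ab; rewrite leNgt; apply/negP => lt_ba.
have d_gt0 : 0 < 2 * (a - b + c) by nra.
set t := (a - b) / (2 * (a - b + c)).
have t_gt0 : 0 < t by rewrite divr_gt0 // subr_gt0.
have tE : t * (2 * (a - b + c)) = a - b by rewrite /t mulfVK // gt_eqF.
have t_lt1 : t < 1 by nra.
have := le_ab t (introT andP (conj t_gt0 t_lt1)).
nra.
Qed.

Lemma firmly_nonexpansive_abs (R : realFieldType) (a b : R) : a ^+ 2 <= a * b ->
  `|a| <= `|b| /\ `|2 * a - b| <= `|b|.
Proof.
move=> le_a2_ab; rewrite !ler_norml.
have [b_ge0 | b_lt0] := lerP 0 b; [rewrite ger0_norm // | rewrite ltr0_norm //].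
  have a_ge0 : 0 <= a by nra.
  have le_ab : a <= b by nra.
  split; apply/andP; split; lra.
have a_le0 : a <= 0 by nra.
have le_ba : b <= a by nra.
split; apply/andP; split; lra.
Qed.

Section ProxOnTheLine.
Variables (R : realType) (alpha : R) (f : R -> \bar R).

Definition is_prox1 (x p : R) : Prop :=
  f p \is a fin_num /\
  forall z, f z \is a fin_num ->
    (x - p) ^+ 2 / 2 + alpha * fine (f p) <= (x - z) ^+ 2 / 2 + alpha * fine (f z).

Hypotheses (alpha_gt0 : 0 < alpha) (fNy : forall u, f u <> -oo%E)
  (f_convex : convex_ext f).

Lemma prox1_variational x p w : is_prox1 x p -> f w \is a fin_num ->
  (x - p) * (w - p) <= alpha * (fine (f w) - fine (f p)).
Proof.
move=> [fp_fin p_min] fw_fin.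
apply: (@le_of_forall_le_add_scaled _ _ _ ((w - p) ^+ 2 / 2)).
  by rewrite divr_ge0 // sqr_ge0.
move=> t /andP[t_gt0 t_lt1].
set z := t * w + (1 - t) * p.
have fz_le : (f z <= t%:E * f w + (1 - t)%:E * f p)%E.
  exact: f_convex (introT andP (conj t_gt0 t_lt1)).
have fz_fin : f z \is a fin_num.
  rewrite fin_numE; apply/andP; split; first exact/eqP/fNy.
  rewrite lt_eqF //; apply: (le_lt_trans fz_le).
  by rewrite -(fineK fw_fin) -(fineK fp_fin) -!EFinM -EFinD ltry.
have fz_conv : fine (f z) <= t * fine (f w) + (1 - t) * fine (f p).
  by move: fz_le; rewrite -(fineK fw_fin) -(fineK fp_fin) -(fineK fz_fin) -!EFinM -EFinD lee_fin.
have alpha_fz : alpha * fine (f z) <= alpha * (t * fine (f w) + (1 - t) * fine (f p)).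
  by rewrite ler_wpM2l // ltW.
have z_min := p_min z fz_fin.
rewrite /z in alpha_fz z_min.
(* Since [x - z = (x - p) - t (w - p)], minimality at [z] reads
   [t (x - p)(w - p) <= t alpha (f w - f p) + t^2 (w - p)^2 / 2]. *)
rewrite -(ler_pM2l t_gt0); nra.
Qed.

Lemma prox1_firmly_nonexpansive x y p q : is_prox1 x p -> is_prox1 y q ->
  (p - q) ^+ 2 <= (p - q) * (x - y).
Proof.
move=> pP qP.
have := prox1_variational pP qP.1.
have := prox1_variational qP pP.1.
nra.
Qed.

End ProxOnTheLine.

Section SeparableProx.
Variables (R : realType) (n : nat) (g : 'I_n -> R -> \bar R) (alpha : R).
Hypotheses (g_proper : forall i, proper_fun (g i)) (alpha_gt0 : 0 < alpha).

Let prox_sep := is_prox (fun z => (alpha%:E * sep_sum g z)%E).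

Lemma sep_prox_fin_num x px : prox_sep x px -> forall i, g i (px i) \is a fin_num.
Proof.
move=> px_min i.
have gNy k u : g k u != -oo%E by apply/eqP; case: (g_proper k).
have [u u_fin] : {u : 'I_n -> R & forall j, g j (u j) \is a fin_num}.
  apply: (@boolp.choice _ _ (fun j v => g j v \is a fin_num)) => j.
  have [_ [v gv_lty]] := g_proper j.
  by exists v; rewrite fin_numE gNy lt_eqF.
rewrite fin_numE gNy /=; apply/negP => /eqP gi_y.
have sum_y : sep_sum g px = +oo%E.
  apply/esum_eqyP; first by move=> k _; exact: gNy.
  by exists i; rewrite mem_index_enum.
have := px_min u; rewrite sum_y gt0_muley ?lte_fin // addey //.
by rewrite /sep_sum -(EFin_sum_fine _ (fun j _ => u_fin j)) -EFinM -EFinD leye_eq.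
Qed.

Definition upd (u : 'I_n -> R) (i : 'I_n) (z : R) (j : 'I_n) : R :=
  if j == i then z else u j.

Lemma sum_upd (F : 'I_n -> R -> R) u i z :
  \sum_(j < n) F j (upd u i z j) = \sum_(j < n) F j (u j) + (F i z - F i (u i)).
Proof.
rewrite (bigD1 i) //= [in RHS](bigD1 i) //= /upd eqxx.
by rewrite (eq_bigr (fun j => F j (u j))) => [|j /negbTE ->]; first ring.
Qed.

Lemma sep_prox_coord x px : prox_sep x px -> forall i, is_prox1 alpha (g i) (x i) (px i).
Proof.
move=> px_min i; have px_fin := sep_prox_fin_num px_min.
split=> // z gz_fin.
have upd_fin j : g j (upd px i z j) \is a fin_num.
  by rewrite /upd; case: eqP => [->|].
have := px_min (upd px i z).
rewrite /sep_sum -(EFin_sum_fine _ (fun j _ => px_fin j)).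
rewrite -(EFin_sum_fine _ (fun j _ => upd_fin j)) -!EFinM -!EFinD lee_fin.
rewrite (sum_upd (fun j v => (x j - v) ^+ 2)) (sum_upd (fun j v => fine (g j v))).
nra.
Qed.

End SeparableProx.

Lemma winf_norm_le (R : realType) n (eta a b : 'I_n -> R) : (forall i, 0 < eta i) ->
  (forall i, `|a i| <= `|b i|) -> winf_norm eta a <= winf_norm eta b.
Proof.
move=> eta_gt0 le_ab; rewrite /winf_norm; elim/big_ind2: _ => //.
  by move=> x1 x2 y1 y2 le1 le2; rewrite ge_max !le_max le1 le2 !orbT.
by move=> i _; rewrite ler_wpM2r // invr_ge0 ltW.
Qed.

Theorem proposition41 (R : realType) (n : nat) (g : 'I_n -> R -> \bar R) :
  (forall i, proper_fun (g i)) ->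
  (forall i, lower_semicontinuous (g i)) ->
  (forall i, convex_ext (g i)) ->
  forall (alpha : R) (eta : 'I_n -> R), 0 < alpha -> (forall i, 0 < eta i) ->
  forall x y px py : 'I_n -> R,
    is_prox (fun z => (alpha%:E * sep_sum g z)%E) x px ->
    is_prox (fun z => (alpha%:E * sep_sum g z)%E) y py ->
    winf_norm eta (px - py) <= winf_norm eta (x - y) /\
    winf_norm eta ((2 *: px - x) - (2 *: py - y)) <= winf_norm eta (x - y).
Proof.
(* Lower semicontinuity only serves the existence of the prox, assumed here. *)
move=> g_proper _ g_convex alpha eta alpha_gt0 eta_gt0 x y px py px_min py_min.
have coord_le i : `|px i - py i| <= `|x i - y i| /\
                  `|2 * (px i - py i) - (x i - y i)| <= `|x i - y i|.
  have gNy u : g i u <> -oo%E by case: (g_proper i).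
  apply/firmly_nonexpansive_abs/(prox1_firmly_nonexpansive alpha_gt0 gNy (g_convex i)).
    exact: (sep_prox_coord g_proper alpha_gt0 px_min i).
  exact: (sep_prox_coord g_proper alpha_gt0 py_min i).
split; apply: winf_norm_le => // i; first exact: (coord_le i).1.
have -> : (2 *: px - x - (2 *: py - y)) i = 2 * (px i - py i) - (x i - y i).
  by rewrite !fctE !scaler_nat !mulr2n; lra.
exact: (coord_le i).2.
Qed.
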